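(* Let $q$ be a prime power and let $X$ be any polarity graph of the generalized quadrangle $W(q)$ (loops at absolute points retained). Then every independent set $S$ of $X$ satisfies \[ |S|\le \frac{\sqrt{2q}+\sqrt{2q+4(q^2+1)\frac{q+\sqrt{2q}+1}{q^3+q^2+q+1}}}{2\,\frac{q+\sqrt{2q}+1}{q^3+q^2+q+1}}. \]
   Context: $W(q)$ is the symplectic generalized quadrangle: its points are the $q^3+q^2+q+1$ points of $PG(3,q)$ and its lines are the $q^3+q^2+q+1$ lines of $PG(3,q)$ that are totally isotropic for a fixed nondegenerate alternating form, with incidence being containment; each point lies on $q+1$ lines, each line has $q+1$ points. A polarity is an incidence-preserving bijection $\sigma$ mapping points to lines and lines to points with $\sigma^2$ the identity. The polarity graph has the points as vertices, with $x$ adjacent to $y$ iff $x$ is incident with $\sigma(y)$; points incident with their own image are absolute and carry loops. An independent set is a set of vertices no two distinct members of which are adjacent (absolute points may belong to it). *)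

From HB Require Import structures.
From mathcomp Require Import all_boot all_order all_algebra all_field.
From Stdlib Require Reals.

Set Implicit Arguments.
Unset Strict Implicit.
Unset Printing Implicit Defensive.

Import GRing.Theory.
Local Open Scope ring_scope.

Section SymplecticGQ.
Variable F : finFieldType.

(* vectors of F^4; projective points / lines of PG(3,F) are the
   1- resp. 2-dimensional subspaces, represented as their sets of vectors *)
Definition is_point (P : {set 'rV[F]_4}) : bool :=
  [exists v : 'rV[F]_4, (v != 0) && (P == [set a *: v | a : F])].

Definition bform (J : 'M[F]_4) (x y : 'rV[F]_4) : 'M[F]_1 := x *m J *m y^T.

Definition nondeg_alternating (J : 'M[F]_4) : Prop :=
  (forall x : 'rV[F]_4, bform J x x = 0) /\ J \in unitmx.

Definition is_line (J : 'M[F]_4) (L : {set 'rV[F]_4}) : bool :=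
  [exists u : 'rV[F]_4, exists v : 'rV[F]_4,
     (\rank (col_mx u v) == 2)%N && (L == [set a *: u + b *: v | a : F, b : F])]
  && [forall x in L, forall y in L, bform J x y == 0].

Definition point := {P : {set 'rV[F]_4} | is_point P}.
Definition line (J : 'M[F]_4) := {L : {set 'rV[F]_4} | is_line J L}.

Definition incident (J : 'M[F]_4) (p : point) (l : line J) : bool :=
  val p \subset val l.

Definition polarity (J : 'M[F]_4) (sp : point -> line J) (sl : line J -> point)
  : Prop :=
  (forall p, sl (sp p) = p) /\ (forall l, sp (sl l) = l) /\
  (forall (p : point) (l : line J), incident p l <-> incident (sl l) (sp p)).

Definition pol_adj (J : 'M[F]_4) (sp : point -> line J) (x y : point) : bool :=
  incident x (sp y).

Definition pol_independent (J : 'M[F]_4) (sp : point -> line J)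
  (S : {set point}) : Prop :=
  forall x y, x \in S -> y \in S -> x != y -> ~~ pol_adj sp x y.

End SymplecticGQ.

Section Bound.
Import Reals.
Local Open Scope R_scope.

Definition wq_bound (q : nat) : R :=
  let r := INR q in
  let c := (r + sqrt (2 * r) + 1) / (r ^ 3 + r ^ 2 + r + 1) in
  (sqrt (2 * r) + sqrt (2 * r + 4 * (r ^ 2 + 1) * c)) / (2 * c).
End Bound.

(* The bound is an expander-mixing estimate for the polarity graph.  Let K be
   the collinearity relation of W(q) and A the adjacency of the polarity graph,
   both as 0/1 matrices on the points.  Counting common neighbours gives
   K K^T = q^2 I + (q+1) 11^T and A A^T = K + q I, so on vectors of zero sum
   |f^T K f| <= q |f|^2 and, by Cauchy-Schwarz, (f^T A f)^2 <= 2q |f|^4.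
   For an independent set S take f = |P| 1_S - |S|: then f^T A f is expressed
   through |S| and the number e of absolute points of S.  Absolute points are
   pairwise non-collinear, so the same computation with K shows e <= q^2 + 1,
   and the mixing inequality becomes a quadratic inequality in |S|. *)

From mathcomp Require Import all_boot all_order all_algebra.
From mathcomp Require Import ring lra zify.
From mathcomp Require Import Rstruct.

Set Implicit Arguments.
Unset Strict Implicit.
Unset Printing Implicit Defensive.

Import Order.TTheory GRing.Theory Num.Theory.
Local Open Scope ring_scope.

Section QuadraticForms.
Variables (R : realFieldType) (P : finType).
Implicit Types (f g : P -> R) (M : P -> P -> R) (T : {set P}).

Definition dotf f g : R := \sum_x f x * g x.
Definition qform M f : R := \sum_x \sum_y f x * M x y * f y.
Definition gram M x z : R := \sum_y M x y * M z y.

Lemma dotf_ge0 f : 0 <= dotf f f.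
Proof. by apply: sumr_ge0 => x _; rewrite -expr2 sqr_ge0. Qed.

Lemma cauchy_schwarz f g : dotf f g ^+ 2 <= dotf f f * dotf g g.
Proof.
set A := dotf f f; set B := dotf g g; set C := dotf f g.
have B_ge0 : 0 <= B := dotf_ge0 g.
have : 0 <= \sum_x (B * f x - C * g x) ^+ 2 by apply: sumr_ge0 => x _; exact: sqr_ge0.
have -> : \sum_x (B * f x - C * g x) ^+ 2 = B * (A * B - C ^+ 2).
  transitivity (\sum_x (B ^+ 2 * (f x * f x) - 2 * B * C * (f x * g x)
                       + C ^+ 2 * (g x * g x))).
    by apply: eq_bigr => x _; ring.
  rewrite big_split sumrB /= -!mulr_sumr -/(dotf f f) -/(dotf f g) -/(dotf g g) -/A -/B -/C.
  ring.
have [B0|B_neq0] := eqVneq B 0.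
  have g0 x : g x = 0.
    apply/eqP; rewrite -sqrf_eq0 expr2; apply/eqP.
    apply: (psumr_eq0P (P := predT) (F := fun x => g x * g x)) => // y _.
    by rewrite -expr2 sqr_ge0.
  by rewrite /C /dotf big1 ?expr0n ?B0 ?mulr0 // => x _; rewrite g0 mulr0.
by rewrite pmulr_rge0 ?lt_def ?B_neq0 // subr_ge0 mulrC.
Qed.

Lemma qform_sqr_le M f : qform M f ^+ 2 <= qform (gram M) f * dotf f f.
Proof.
pose Mf y := \sum_x f x * M x y.
have -> : qform M f = dotf Mf f.
  by rewrite /qform exchange_big; apply: eq_bigr => y _; rewrite mulr_suml.
have -> : qform (gram M) f = dotf Mf Mf.
  rewrite /qform /dotf /gram.
  under eq_bigr => x _ do under eq_bigr => z _ do rewrite mulr_sumr mulr_suml.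
  under [RHS]eq_bigr => y _ do rewrite big_distrlr.
  rewrite [RHS]exchange_big; apply: eq_bigr => x _; rewrite [RHS]exchange_big.
  by apply: eq_bigr => z _; apply: eq_bigr => y _ /=; ring.
exact: cauchy_schwarz.
Qed.

Lemma qform_const c f : qform (fun _ _ => c) f = c * (\sum_x f x) ^+ 2.
Proof.
rewrite expr2 big_distrlr mulr_sumr; apply: eq_bigr => x _.
by rewrite mulr_sumr; apply: eq_bigr => y _ /=; ring.
Qed.

Lemma qform_shift M N c f : (forall x y, N x y = M x y + (x == y)%:R * c) ->
  qform N f = qform M f + c * dotf f f.
Proof.
move=> NE; rewrite /qform /dotf mulr_sumr -big_split; apply: eq_bigr => x _ /=.
rewrite (eq_bigr (fun y => f x * M x y * f y + f x * ((x == y)%:R * c) * f y)); last first.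
  by move=> y _; rewrite NE; ring.
rewrite big_split /=; congr (_ + _).
rewrite (bigD1 x) //= eqxx mul1r big1 ?addr0 => [|y]; first by ring.
by rewrite eq_sym => /negPf->; rewrite mul0r mulr0 mul0r.
Qed.

Definition relmx (r : rel P) : P -> P -> R := fun x y => (r x y)%:R.
Definition indic T : P -> R := fun x => (x \in T)%:R.
Definition centred T : P -> R := fun x => #|P|%:R * indic T x - #|T|%:R.

Lemma sum_indic T : \sum_x indic T x = #|T|%:R.
Proof.
rewrite -sum1_card natr_sum [RHS]big_mkcond /=.
by apply: eq_bigr => x _; rewrite /indic; case: (x \in T).
Qed.

Lemma sum_relmx (r : rel P) x : \sum_y relmx r x y = #|[set y | r x y]|%:R.
Proof. by rewrite -sum_indic; apply: eq_bigr => y _; rewrite /indic inE. Qed.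

Lemma gram_relmx (r : rel P) x z :
  gram (relmx r) x z = #|[set y | r x y && r z y]|%:R.
Proof. by rewrite -sum_indic; apply: eq_bigr => y _; rewrite /indic inE -natrM mulnb. Qed.

Lemma sum_centred T : \sum_x centred T x = 0.
Proof. by rewrite sumrB -mulr_sumr sum_indic sumr_const; ring. Qed.

Lemma dotf_centred T :
  dotf (centred T) (centred T) = #|P|%:R * #|T|%:R * (#|P|%:R - #|T|%:R).
Proof.
have indic2 x : indic T x * indic T x = indic T x by rewrite /indic -natrM mulnb andbb.
transitivity (\sum_x (#|P|%:R ^+ 2 - 2 * #|P|%:R * #|T|%:R) * indic T x
              + \sum_(x : P) #|T|%:R ^+ 2).
  rewrite -big_split; apply: eq_bigr => x _ /=; rewrite /centred.
  transitivity (#|P|%:R ^+ 2 * (indic T x * indic T x) - 2 * #|P|%:R * #|T|%:R * indic T x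
                + #|T|%:R ^+ 2); first by ring.
  by rewrite indic2; ring.
by rewrite -mulr_sumr sum_indic sumr_const; ring.
Qed.

Lemma qform_centred M d T :
  (forall x, \sum_y M x y = d) -> (forall y, \sum_x M x y = d) ->
  qform M (centred T) = #|P|%:R ^+ 2 * qform M (indic T) - #|P|%:R * #|T|%:R ^+ 2 * d.
Proof.
move=> rowM colM; set n := #|P|%:R; set t := #|T|%:R.
transitivity (n ^+ 2 * qform M (indic T) - n * t * (\sum_x \sum_y indic T x * M x y)
  - n * t * (\sum_x \sum_y M x y * indic T y) + t ^+ 2 * (\sum_x \sum_y M x y)).
  rewrite /qform !mulr_sumr -!sumrB -big_split; apply: eq_bigr => x _ /=.
  by rewrite !mulr_sumr -!sumrB -big_split; apply: eq_bigr => y _ /=; rewrite /centred; ring.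
under eq_bigr => x _ do rewrite -mulr_sumr rowM.
rewrite [\sum_x \sum_y M x y * _]exchange_big /=.
under [\sum_y \sum_x M x y * _]eq_bigr => y _ do rewrite -mulr_suml colM.
under [\sum_x \sum_y M x y]eq_bigr => x _ do rewrite rowM.
by rewrite -!mulr_suml -mulr_sumr !sum_indic sumr_const /n; ring.
Qed.

Lemma qform_indic_independent (r : rel P) T :
  {in T &, forall x y, x != y -> ~~ r x y} ->
  qform (relmx r) (indic T) = #|[set x in T | r x x]|%:R.
Proof.
move=> indepT; rewrite -sum_indic; apply: eq_bigr => x _.
rewrite (bigD1 x) //= big1 ?addr0 => [|y yx].
  by rewrite /relmx /indic inE; case: (x \in T); case: (r x x); rewrite ?mulr0 ?mul0r ?mulr1.
rewrite /relmx /indic; case xT : (x \in T); last by rewrite !mul0r.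
case yT : (y \in T); last by rewrite mulr0.
by rewrite (negPf (indepT x y xT yT _)) ?mulr0 ?mul0r // eq_sym.
Qed.

End QuadraticForms.

Section PolarityGraph.
Variables (P : finType) (q : nat) (perp adj : rel P).
Hypotheses (perp_sym : symmetric perp) (perp_refl : reflexive perp) (adj_sym : symmetric adj).
Hypothesis card_perp : forall x, #|[set y | perp x y]| = (q ^ 2 + q + 1)%N.
Hypothesis card_perpI :
  forall x z, x != z -> #|[set y | perp x y && perp z y]| = (q + 1)%N.
Hypothesis card_adjI :
  forall x z, #|[set y | adj x y && adj z y]| = (perp x z + q * (x == z))%N.
Hypothesis card_P : #|P| = (q ^ 3 + q ^ 2 + q + 1)%N.

Lemma card_adj x : #|[set y | adj x y]| = (q + 1)%N.
Proof.
have := card_adjI x x; rewrite perp_refl eqxx muln1 addnC => <-.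
by apply: eq_card => y; rewrite !inE andbb.
Qed.

Lemma perp_of_adj u v w : adj u w -> adj v w -> perp u v.
Proof.
move=> uw vw; have [-> | uv] := eqVneq u v; first exact: perp_refl.
apply: contraTT isT => /negPf perp_uv.
have := card_adjI u v; rewrite perp_uv (negPf uv) muln0 => /eqP; rewrite cards_eq0.
by move/eqP/setP/(_ w); rewrite !inE uw vw.
Qed.

Lemma adj_common_uniq u v w1 w2 : u != v -> perp u v ->
  adj u w1 -> adj v w1 -> adj u w2 -> adj v w2 -> w1 = w2.
Proof.
move=> uv perp_uv uw1 vw1 uw2 vw2.
have := card_adjI u v; rewrite perp_uv (negPf uv) muln0 => /eqP/cards1P[w ew].
have : w1 \in [set w] by rewrite -ew inE uw1 vw1.
have : w2 \in [set w] by rewrite -ew inE uw2 vw2.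
by rewrite !inE => /eqP-> /eqP->.
Qed.

(* If distinct absolute points x, y were perpendicular, their unique common
   neighbour w would have neighbourhood x^perp :&: y^perp, which contains w;
   then x and w would be perpendicular with two common neighbours x and w. *)
Lemma absolute_not_perp x y : adj x x -> adj y y -> x != y -> ~~ perp x y.
move=> xx yy xy; apply/negP => perp_xy.
have := card_adjI x y; rewrite perp_xy (negPf xy) muln0 => /eqP/cards1P[w ew].
have /andP[xw yw] : adj x w && adj y w by have := set11 w; rewrite -ew inE.
have not_xy : ~~ adj x y.
  apply/negP => x_y; have yx : adj y x by rewrite adj_sym.
  by have := xy; rewrite (adj_common_uniq xy perp_xy xx yx x_y yy) eqxx.
have wx : w != x by apply: contraNneq not_xy => wE; rewrite adj_sym -wE.
have perp_xw : perp x w by apply: (perp_of_adj xx); rewrite adj_sym.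
have perp_yw : perp y w by apply: (perp_of_adj yy); rewrite adj_sym.
have nbr_w : [set u | adj w u] = [set u | perp x u && perp y u].
  apply/eqP; rewrite eqEcard card_adj card_perpI // leqnn andbT.
  apply/subsetP => u; rewrite !inE => wu.
  by rewrite !(perp_of_adj _ (_ : adj u w)) // adj_sym.
have ww : adj w w.
  have : w \in [set u | perp x u && perp y u] by rewrite inE perp_xw perp_yw.
  by rewrite -nbr_w inE.
have xw_ne : x != w by rewrite eq_sym.
have wx_adj : adj w x by rewrite adj_sym.
by have := wx; rewrite (adj_common_uniq xw_ne perp_xw xw ww xx wx_adj) eqxx.
Qed.

Section Spectral.
Variable R : realFieldType.
Local Notation K := (relmx R perp).
Local Notation A := (relmx R adj).

Lemma gram_perp x z : gram K x z = (q + 1)%:R + (x == z)%:R * (q ^ 2)%:R.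
Proof.
rewrite gram_relmx; have [<- | xz] := eqVneq x z; last by rewrite card_perpI // mul0r addr0.
rewrite mul1r -natrD addnC addnA -(card_perp x); congr _%:R.
by apply: eq_card => y; rewrite !inE andbb.
Qed.

Lemma gram_adj x z : gram A x z = K x z + (x == z)%:R * q%:R.
Proof. by rewrite gram_relmx card_adjI natrD natrM mulrC. Qed.

Lemma qform_perp_le f : \sum_x f x = 0 -> `|qform K f| <= q%:R * dotf f f.
Proof.
move=> f0; rewrite -ler_sqr ?nnegrE ?mulr_ge0 ?dotf_ge0 // real_normK ?num_real //.
apply: le_trans (qform_sqr_le K f) _.
rewrite (qform_shift _ gram_perp) qform_const f0 expr0n mulr0 add0r.
by rewrite natrX exprMn expr2 mulrA.
Qed.

Lemma qform_adj_sqr_le f : \sum_x f x = 0 ->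
  qform A f ^+ 2 <= (2 * q)%:R * dotf f f ^+ 2.
Proof.
move=> f0; apply: (le_trans (qform_sqr_le A f)).
rewrite (qform_shift _ gram_adj) expr2 mulrA ler_wpM2r ?dotf_ge0 //.
have := ler_normlW (qform_perp_le f0); rewrite natrM; lra.
Qed.

Lemma independent_mixing (S : {set P}) :
  {in S &, forall x y, x != y -> ~~ adj x y} ->
  (#|P|%:R ^+ 2 * #|[set x in S | adj x x]|%:R - #|P|%:R * #|S|%:R ^+ 2 * (q + 1)%:R) ^+ 2
    <= (2 * q)%:R * (#|P|%:R * #|S|%:R * (#|P|%:R - #|S|%:R)) ^+ 2 :> R.
Proof.
move=> indepS.
have rowA x : \sum_y A x y = (q + 1)%:R by rewrite sum_relmx card_adj.
have colA y : \sum_x A x y = (q + 1)%:R.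
  by rewrite -(rowA y); apply: eq_bigr => x _; rewrite /relmx adj_sym.
have := qform_adj_sqr_le (sum_centred R S).
by rewrite (qform_centred _ rowA colA) (qform_indic_independent _ indepS) dotf_centred.
Qed.

End Spectral.

Lemma card_absolute : (#|[set x | adj x x]| <= q ^ 2 + 1)%N.
Proof.
set O := [set x | adj x x]; set m := #|O|.
have indepO : {in O &, forall x y, x != y -> ~~ perp x y}.
  by move=> x y; rewrite !inE; exact: absolute_not_perp.
have rowK x : \sum_y relmx rat perp x y = (q ^ 2 + q + 1)%:R by rewrite sum_relmx card_perp.
have colK y : \sum_x relmx rat perp x y = (q ^ 2 + q + 1)%:R.
  by rewrite -(rowK y); apply: eq_bigr => x _; rewrite /relmx perp_sym.
have := lerNnormlW (qform_perp_le (sum_centred rat O)).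
rewrite (qform_centred _ rowK colK) (qform_indic_independent _ indepO) dotf_centred.
have -> : #|[set x in O | perp x x]| = m by apply: eq_card => x; rewrite !inE perp_refl andbT.
rewrite card_P => key.
have [-> // | m_gt0] := posnP m.
have : 0 <= ((q ^ 3 + q ^ 2 + q + 1) * m * (q + 1))%:R
            * (((q ^ 2 + 1) * (q + 1))%:R - (m * (q + 1))%:R) :> rat.
  by move: key; rewrite !(natrD, natrM, natrX); nra.
rewrite pmulr_rge0 ?ltr0n ?muln_gt0 ?m_gt0 ?addn1 // subr_ge0 ler_nat.
by rewrite leq_pmul2r ?addn1.
Qed.

End PolarityGraph.

Section RealBounds.
Variable R : rcfType.

Lemma le_quadratic_root (a b c s : R) : 0 < a -> a * s ^+ 2 - b * s - c <= 0 ->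
  s <= (b + Num.sqrt (b ^+ 2 + 4 * a * c)) / (2 * a).
Proof.
move=> a_gt0 hs.
rewrite ler_pdivlMr ?mulr_gt0 //.
have sq : (2 * a * s - b) ^+ 2 <= b ^+ 2 + 4 * a * c.
  have -> : (2 * a * s - b) ^+ 2 = b ^+ 2 + 4 * a * (a * s ^+ 2 - b * s) by ring.
  by rewrite lerD2l ler_pM2l ?mulr_gt0 //; lra.
suff : 2 * a * s - b <= Num.sqrt (b ^+ 2 + 4 * a * c) by lra.
by rewrite (le_trans (ler_norm _)) // -sqrtr_sqr ler_wsqrtr.
Qed.

Definition indep_bound (q : R) : R :=
  let c := (q + Num.sqrt (2 * q) + 1) / (q ^+ 3 + q ^+ 2 + q + 1) in
  (Num.sqrt (2 * q) + Num.sqrt (2 * q + 4 * (q ^+ 2 + 1) * c)) / (2 * c).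

Lemma le_indep_bound (q n s e : R) : 0 <= q -> n = q ^+ 3 + q ^+ 2 + q + 1 ->
  0 <= s <= n -> e <= q ^+ 2 + 1 ->
  (n ^+ 2 * e - n * s ^+ 2 * (q + 1)) ^+ 2 <= 2 * q * (n * s * (n - s)) ^+ 2 ->
  s <= indep_bound q.
Proof.
move=> q_ge0 nE /andP[s_ge0 s_le_n] e_le mixing.
have n_gt0 : 0 < n by rewrite nE; nra.
set b := Num.sqrt (2 * q).
have b_ge0 : 0 <= b := sqrtr_ge0 _.
have bb : b ^+ 2 = 2 * q by rewrite sqr_sqrtr ?mulr_ge0.
have Y_ge0 : 0 <= s * (n - s) by rewrite mulr_ge0 ?subr_ge0.
have normX : `|n * e - s ^+ 2 * (q + 1)| <= b * (s * (n - s)).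
  rewrite -ler_sqr ?nnegrE ?mulr_ge0 ?subr_ge0 // real_normK ?num_real //.
  rewrite -(ler_pM2l (exprn_gt0 2 n_gt0)).
  by move: mixing; congr (_ <= _); [ring | rewrite -bb; ring].
set c := (q + b + 1) / (q ^+ 3 + q ^+ 2 + q + 1).
have nc : n * c = q + b + 1 by rewrite /c -nE mulrC divfK ?gt_eqF.
rewrite /indep_bound -/b -/c -bb [4 * _ * c]mulrAC.
apply: le_quadratic_root; first by rewrite -(pmulr_rgt0 _ n_gt0) nc; lra.
rewrite -(pmulr_rle0 _ n_gt0).
move: normX; rewrite ler_norml => /andP[lo _].
have -> : n * (c * s ^+ 2 - b * s - (q ^+ 2 + 1)) =
          (q + b + 1) * s ^+ 2 - b * n * s - n * (q ^+ 2 + 1).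
  by rewrite !mulrBr mulrA nc; ring.
nra.
Qed.

End RealBounds.

Lemma wq_boundE (q : nat) : wq_bound q = indep_bound (q%:R : Rdefinitions.R).
Proof. by rewrite /wq_bound !RealsE. Qed.

Lemma double_count (T1 T2 : finType) (A1 : {set T1}) (A2 : {set T2}) (r : T1 -> T2 -> bool) :
  (\sum_(x in A1) #|[set y in A2 | r x y]| = \sum_(y in A2) #|[set x in A1 | r x y]|)%N.
Proof.
have card_sum (T : finType) (A : {set T}) (p : pred T) :
    #|[set y in A | p y]| = (\sum_(y in A) p y)%N.
  rewrite -sum1_card big_mkcond [RHS]big_mkcond /=; apply: eq_bigr => y _; rewrite !inE.
  by case: (y \in A); case: (p y).
under eq_bigr => x _ do rewrite card_sum.
by rewrite exchange_big; apply: eq_bigr => y _; rewrite card_sum.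
Qed.

Section ProjectiveSpace.
Variable F : finFieldType.
Local Notation q := #|F|.
Local Notation vec := 'rV[F]_4.

Definition rowset m (U : 'M[F]_(m, 4)) : {set vec} := [set w | (w <= U)%MS].

Lemma card_rowset m (U : 'M[F]_(m, 4)) : #|rowset U| = (q ^ \rank U)%N.
Proof.
rewrite -[\rank U]mul1n -card_mx.
have /row_freeP[B BK] := row_base_free U.
have inj_base : injective (mulmxr (row_base U) : 'M_(1, \rank U) -> vec).
  by apply: can_inj (mulmxr B) _ => u; rewrite /= -mulmxA BK mulmx1.
rewrite -(card_image inj_base); apply: eq_card => v.
by rewrite inE -(eq_row_base U) (sameP submxP codomP).
Qed.

Lemma rowset_subset m1 m2 (U1 : 'M[F]_(m1, 4)) (U2 : 'M[F]_(m2, 4)) :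
  (rowset U1 \subset rowset U2) = (U1 <= U2)%MS.
Proof.
apply/subsetP/idP => [sub | sU w]; last by rewrite !inE => /submx_trans; apply.
by apply/row_subP => i; have := sub (row i U1); rewrite !inE; apply; exact: row_sub.
Qed.

Lemma eqmx_rowset m1 m2 (U1 : 'M[F]_(m1, 4)) (U2 : 'M[F]_(m2, 4)) :
  (U1 :=: U2)%MS -> rowset U1 = rowset U2.
Proof. by move=> eqU; apply/setP => w; rewrite !inE eqU. Qed.

Lemma scale_set (v : vec) : [set a *: v | a : F] = rowset v.
Proof.
by apply/setP => w; rewrite inE; apply/imsetP/sub_rVP => [[a _ ->] | [a ->]]; exists a.
Qed.

Lemma span2_set (u v : vec) :
  [set a *: u + b *: v | a : F, b : F] = rowset (col_mx u v).
Proof.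
apply/setP => w; rewrite inE; apply/imset2P/idP => [[a b _ _ ->] | /submxP[c ->]].
  by rewrite addmx_sub ?scalemx_sub // -addsmxE (addsmxSl, addsmxSr).
exists (lsubmx c 0 0) (rsubmx c 0 0) => //.
rewrite -{1}(hsubmxK c) mul_row_col.
by rewrite {1}(mx11_scalar (lsubmx c)) {1}(mx11_scalar (rsubmx c)) !mul_scalar_mx.
Qed.

Lemma pointP (x : point F) : exists2 v : vec, v != 0 & val x = rowset v.
Proof.
have /existsP[v /andP[v_neq0 /eqP xE]] := valP x.
by exists v; rewrite // xE scale_set.
Qed.

Lemma is_point_rowset (w : vec) : w != 0 -> is_point (rowset w).
Proof. by move=> w_neq0; apply/existsP; exists w; rewrite w_neq0 scale_set eqxx. Qed.

Lemma mem_point (x : point F) (w : vec) : w != 0 -> (w \in val x) = (val x == rowset w).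
Proof.
move=> w_neq0; apply/idP/eqP => [|->]; last by rewrite inE.
have [v v_neq0 ->] := pointP x; rewrite inE => wv.
apply: eqmx_rowset; apply/eqmxP; rewrite wv /=.
have := mxrank_leqif_sup wv; rewrite !rank_rV v_neq0 w_neq0 => /leqifP.
by case: ifP.
Qed.

Lemma card_point (x : point F) : #|val x| = q.
Proof. by have [v v_neq0 ->] := pointP x; rewrite card_rowset rank_rV v_neq0 expn1. Qed.

Lemma card_points_through m (U : 'M[F]_(m, 4)) (w : vec) : w != 0 -> (w <= U)%MS ->
  #|[set x : point F | (val x \subset rowset U) && (w \in val x)]| = 1%N.
Proof.
move=> w_neq0 wU; apply/eqP/cards1P.
exists (exist _ (rowset w) (is_point_rowset w_neq0)); apply/setP => x.
rewrite !inE (mem_point _ w_neq0).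
apply/andP/eqP => [[_ /eqP xw] | ->]; first exact: val_inj.
by rewrite /= rowset_subset.
Qed.

Lemma count_points m (U : 'M[F]_(m, 4)) :
  (#|[set x : point F | val x \subset rowset U]| * (q - 1) = q ^ \rank U - 1)%N.
Proof.
set X := [set x : point F | val x \subset rowset U].
have -> : (q ^ \rank U - 1 = #|rowset U :\ 0%R|)%N.
  by rewrite -card_rowset (cardsD1 (0 : vec)) inE sub0mx addKn.
transitivity (\sum_(x in X) #|[set w in rowset U :\ 0%R | w \in val x]|)%N.
  rewrite -sum_nat_const; apply: eq_bigr => x; rewrite inE => xU.
  rewrite -(card_point x) (cardsD1 (0 : vec) (val x)).
  have [v _ xv] := pointP x; move: xU; rewrite xv rowset_subset => vU.
  rewrite inE sub0mx add1n subSS subn0.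
  apply: eq_card => w; rewrite !inE; case: (w =P 0) => //= _.
  by apply/esym/andb_idl => /submx_trans; apply.
rewrite double_count -sum1_card; apply: eq_bigr => w; rewrite !inE => /andP[w_neq0 wU].
rewrite -[RHS](card_points_through w_neq0 wU).
by apply: eq_card => x; rewrite !inE.
Qed.

Lemma q_gt1 : (1 < q)%N.
Proof. exact: card_finNzRing_gt1. Qed.

Lemma card_points_sub m (U : 'M[F]_(m, 4)) k : (q ^ \rank U - 1 = k * (q - 1))%N ->
  #|[set x : point F | val x \subset rowset U]| = k.
Proof.
move=> rankE; apply/eqP; rewrite -(eqn_pmul2r (_ : 0 < q - 1)%N) ?subn_gt0 ?q_gt1 //.
by rewrite count_points rankE.
Qed.

Lemma card_points_rank2 m (U : 'M[F]_(m, 4)) : \rank U = 2%N ->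
  #|[set x : point F | val x \subset rowset U]| = (q + 1)%N.
Proof. by move=> rU; apply: card_points_sub; rewrite rU; have := q_gt1; nia. Qed.

Lemma card_points_rank3 m (U : 'M[F]_(m, 4)) : \rank U = 3%N ->
  #|[set x : point F | val x \subset rowset U]| = (q ^ 2 + q + 1)%N.
Proof. by move=> rU; apply: card_points_sub; rewrite rU; have := q_gt1; nia. Qed.

Lemma card_point_type : #|{: point F}| = (q ^ 3 + q ^ 2 + q + 1)%N.
Proof.
rewrite -cardsT -(@card_points_sub _ (1%:M : 'M[F]_4) (q ^ 3 + q ^ 2 + q + 1)).
  apply: eq_card => x; rewrite !inE; have [v _ ->] := pointP x.
  by rewrite rowset_subset submx1.
by rewrite mxrank1; have := q_gt1; nia.
Qed.

End ProjectiveSpace.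

Section SymplecticQuadrangle.
Variables (F : finFieldType) (J : 'M[F]_4).
Hypothesis hJ : nondeg_alternating J.
Local Notation q := #|F|.
Local Notation vec := 'rV[F]_4.

Lemma bformDl (u v w : vec) : bform J (u + v) w = bform J u w + bform J v w.
Proof. by rewrite /bform !mulmxDl. Qed.

Lemma bformDr (u v w : vec) : bform J w (u + v) = bform J w u + bform J w v.
Proof. by rewrite /bform linearD /= mulmxDr. Qed.

Lemma bformZl a (v w : vec) : bform J (a *: v) w = a *: bform J v w.
Proof. by rewrite /bform -!scalemxAl. Qed.

Lemma bformZr a (v w : vec) : bform J w (a *: v) = a *: bform J w v.
Proof. by rewrite /bform linearZ /= scalemxAr. Qed.

Lemma bform_eq0_ker (v w : vec) : (bform J v w == 0) = (w <= kermx (v *m J)^T)%MS.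
Proof. by rewrite sub_kermx /bform -trmx_eq0 trmx_mul trmxK. Qed.

Lemma bform_skew (v w : vec) : bform J w v = - bform J v w.
Proof.
have := hJ.1 (v + w); rewrite bformDl !bformDr (hJ.1 v) (hJ.1 w) add0r addr0.
by move/eqP; rewrite addrC addr_eq0 => /eqP.
Qed.

Lemma lineP (L : line J) : exists2 U : 'M[F]_(2, 4), \rank U = 2%N & val L = rowset U.
Proof.
have /andP[/existsP[u /existsP[v /andP[/eqP rankU /eqP LE]]] _] := valP L.
by exists (col_mx u v); rewrite // LE span2_set.
Qed.

Lemma line_isotropic (L : line J) w1 w2 :
  w1 \in val L -> w2 \in val L -> bform J w1 w2 = 0.
Proof.
have /andP[_ /forall_inP iso] := valP L.
by move=> w1L w2L; have /forall_inP/(_ w2 w2L)/eqP := iso w1 w1L.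
Qed.

Definition pt_perp (x y : point F) : bool :=
  [forall v in val x, forall w in val y, bform J v w == 0].

Lemma pt_perpE (x y : point F) (v w : vec) : val x = rowset v -> val y = rowset w ->
  pt_perp x y = (bform J v w == 0).
Proof.
move=> xE yE; apply/forall_inP/eqP => [perp_xy | vw0 v1].
  have /perp_xy/forall_inP/(_ w) : v \in val x by rewrite xE inE.
  by rewrite yE inE submx_refl => /(_ isT)/eqP.
rewrite xE inE => /sub_rVP[a ->]; apply/forall_inP => w1.
by rewrite yE inE => /sub_rVP[b ->]; rewrite bformZl bformZr vw0 !scaler0.
Qed.

Lemma pt_perp_sym : symmetric pt_perp.
Proof.
move=> x y; have [v _ xE] := pointP x; have [w _ yE] := pointP y.
by rewrite (pt_perpE xE yE) (pt_perpE yE xE) bform_skew oppr_eq0.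
Qed.

Lemma pt_perp_refl : reflexive pt_perp.
Proof. by move=> x; have [v _ xE] := pointP x; rewrite (pt_perpE xE xE) hJ.1. Qed.

Lemma pt_perp_subset (x y : point F) (v : vec) : val x = rowset v ->
  pt_perp x y = (val y \subset rowset (kermx (v *m J)^T)).
Proof.
move=> xE; have [w _ yE] := pointP y.
by rewrite (pt_perpE xE yE) yE rowset_subset bform_eq0_ker.
Qed.

Lemma card_pt_perp x : #|[set y | pt_perp x y]| = (q ^ 2 + q + 1)%N.
Proof.
have [v v_neq0 xE] := pointP x.
rewrite -(@card_points_rank3 _ _ (kermx (v *m J)^T)).
  by apply: eq_card => y; rewrite !inE (pt_perp_subset _ xE).
rewrite mxrank_ker mxrank_tr mxrankMfree ?rank_rV ?v_neq0 //.
by rewrite row_free_unit hJ.2.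
Qed.

Lemma rank_col_independent (v w : vec) : v != 0 -> ~~ (w <= v)%MS ->
  \rank (col_mx v w) = 2%N.
Proof.
move=> v_neq0 wv; apply/eqP; rewrite eqn_leq rank_leq_row /= -addsmxE.
have := mxrank_leqif_sup (addsmxSl v w).
by rewrite addsmx_sub submx_refl (negPf wv) rank_rV v_neq0 => /ltn_leqif.
Qed.

Lemma points_independent (x z : point F) (v w : vec) : x != z ->
  val x = rowset v -> val z = rowset w -> w != 0 -> ~~ (w <= v)%MS.
Proof.
move=> xz xE zE w_neq0; apply: contra xz => wv.
by apply/eqP/val_inj; rewrite zE; apply/eqP; rewrite -mem_point // xE inE.
Qed.

Lemma card_pt_perpI x z : x != z ->
  #|[set y | pt_perp x y && pt_perp z y]| = (q + 1)%N.
Proof.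
move=> xz; have [v v_neq0 xE] := pointP x; have [w w_neq0 zE] := pointP z.
rewrite -(@card_points_rank2 _ _ (kermx (col_mx v w *m J)^T)).
  apply: eq_card => y; have [u _ yE] := pointP y.
  rewrite !inE !(pt_perp_subset _ xE, pt_perp_subset _ zE) yE !rowset_subset.
  by rewrite !sub_kermx mul_col_mx tr_col_mx mul_mx_row row_mx_eq0.
rewrite mxrank_ker mxrank_tr mxrankMfree ?row_free_unit ?hJ.2 //.
by rewrite rank_col_independent // (points_independent xz xE zE).
Qed.

Lemma span2_isotropic (u v : vec) : bform J u v = 0 ->
  {in rowset (col_mx u v) &, forall w1 w2, bform J w1 w2 = 0}.
Proof.
move=> uv0 w1 w2; rewrite -span2_set => /imset2P[a b _ _ ->] /imset2P[c d _ _ ->].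
rewrite !(bformDl, bformDr, bformZl, bformZr) !hJ.1 (bform_skew u v) uv0.
by rewrite oppr0 !(scaler0, addr0).
Qed.

Lemma card_lines_through2 (x z : point F) : x != z ->
  #|[set L : line J | (val x \subset val L) && (val z \subset val L)]| = pt_perp x z.
Proof.
move=> xz; have [v v_neq0 xE] := pointP x; have [w w_neq0 zE] := pointP z.
have rank_vw := rank_col_independent v_neq0 (points_independent xz xE zE w_neq0).
case perp_xz : (pt_perp x z); last first.
  apply/eqP; rewrite cards_eq0; apply/eqP/setP => L; rewrite !inE.
  apply/negbTE/negP => /andP[xL zL].
  have vL : v \in val L by apply: (subsetP xL); rewrite xE inE.
  have wL : w \in val L by apply: (subsetP zL); rewrite zE inE.
  by move: perp_xz; rewrite (pt_perpE xE zE) (line_isotropic vL wL) eqxx.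
have is_line_vw : is_line J (rowset (col_mx v w)).
  apply/andP; split.
    by apply/existsP; exists v; apply/existsP; exists w; rewrite rank_vw span2_set !eqxx.
  have vw0 : bform J v w = 0 by apply/eqP; rewrite -(pt_perpE xE zE).
  apply/forall_inP => w1 w1vw; apply/forall_inP => w2 w2vw.
  by rewrite (span2_isotropic vw0).
apply/eqP/cards1P; exists (exist (is_line J) _ is_line_vw); apply/setP => L; rewrite !inE.
apply/andP/eqP => [[xL zL] | ->]; last first.
  by rewrite /= xE zE !rowset_subset -!addsmxE addsmxSl addsmxSr.
have [U rankU LE] := lineP L.
rewrite LE xE zE !rowset_subset in xL zL.
have sub : (col_mx v w <= U)%MS by rewrite col_mx_sub xL zL.
have := mxrank_leqif_eq sub; rewrite rank_vw rankU => /leqifP; case: ifP => // eqU _.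
by apply: val_inj; rewrite /= LE; apply/esym/eqmx_rowset/eqmxP.
Qed.

Section Polarity.
Variables (sp : point F -> line J) (sl : line J -> point F).
Hypothesis hpol : polarity sp sl.

Lemma pol_adj_sym : symmetric (pol_adj sp).
Proof.
have [slK [_ inc]] := hpol.
by move=> x y; apply/idP/idP => /(inc _ _).1; rewrite slK.
Qed.

Lemma card_pol_adjI (x z : point F) :
  #|[set y | pol_adj sp x y && pol_adj sp z y]| = (pt_perp x z + q * (x == z))%N.
Proof.
have [<- | xz] := eqVneq x z.
  rewrite pt_perp_refl /= muln1 addnC.
  have [U rankU spxE] := lineP (sp x); rewrite -(card_points_rank2 rankU) -spxE.
  by apply: eq_card => y; rewrite !inE andbb pol_adj_sym.
have sp_bij : bijective sp by have [slK [spK _]] := hpol; exists sl.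
rewrite /= muln0 addn0 -(card_lines_through2 xz) -(on_card_preimset (onW_bij _ sp_bij)).
by apply: eq_card => y; rewrite !inE.
Qed.

End Polarity.
End SymplecticQuadrangle.

Theorem mainTheorem11 (F : finFieldType) (J : 'M[F]_4)
  (hJ : nondeg_alternating J)
  (sp : point F -> line J) (sl : line J -> point F)
  (hpol : polarity sp sl)
  (S : {set point F}) (hS : pol_independent sp S) :
  Rdefinitions.Rle (Raxioms.INR #|S|) (wq_bound #|F|).
Proof.
have mixing := independent_mixing (pt_perp_refl hJ) (pol_adj_sym hpol) (card_pt_perp hJ)
  (card_pt_perpI hJ) (card_pol_adjI hJ hpol) Rdefinitions.R hS.
have absolute := card_absolute (pt_perp_sym hJ) (pt_perp_refl hJ) (pol_adj_sym hpol)
  (card_pt_perp hJ) (card_pt_perpI hJ) (card_pol_adjI hJ hpol) (card_point_type F).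
apply/RleP; rewrite INRE wq_boundE.
apply: (@le_indep_bound _ _ #|{: point F}|%:R _ #|[set x in S | pol_adj sp x x]|%:R).
- exact: ler0n.
- by rewrite card_point_type !natrD !natrX.
- by rewrite ler0n ler_nat max_card.
- rewrite -natrX natr1 ler_nat; move: absolute; rewrite addn1; apply: leq_trans.
  by apply/subset_leq_card/subsetP => x; rewrite !inE => /andP[].
- by move: mixing; rewrite natrD natrM.
Qed.
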